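(* For every integer $N\ge 5$ there exists $q_0(N)$ such that for all prime powers $q\ge q_0(N)$, $$f^{\mathrm{opt}}(N,q)=u\bigl(f^{\mathrm{opt}}(\cdot,q),N,q,k^*(N)\bigr).$$
   Context: Let $f(n,q)$ denote the smallest size of a set of lines of $\mathrm{PG}(n,q)$ (projective space over $\mathbb F_q$) such that every plane contains one of them; its values for small $n$ are $f(-1,q)=f(0,q)=f(1,q)=0$, $f(2,q)=1$, $f(3,q)=q^2+1$, $f(4,q)=q^4+2q^2+q+1$. For $n\ge1$ and a function $\phi$ defined on $\{-1,0,\dots,n-1\}$ with $\phi(-1)=0$, and $-1\le k\le\frac{n-1}{2}$, set $$u(\phi,n,q,k)=q^{2k+2}\phi(n-k-1)+\phi(k)+\Bigl(\sum_{i=0}^kq^i\Bigr)\Bigl(\sum_{j=k}^{n-2}q^j\Bigr).$$ Define $f^{\mathrm{opt}}(n,q)=f(n,q)$ for $-1\le n\le 4$, and recursively $f^{\mathrm{opt}}(n,q)=\min_{0\le k\le\frac{n-1}{2}}u(f^{\mathrm{opt}}(\cdot,q),n,q,k)$ for $n\ge5$. For a positive integer $n$, $k^*(n):=n-2^{\lfloor\log_2 n\rfloor}$ is the unique integer $0\le k\le\frac{n-1}{2}$ such that $n-k$ is a power of $2$. *)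

From mathcomp Require Import all_boot.
Set Implicit Arguments. Unset Strict Implicit. Unset Printing Implicit Defensive.

(* Functions phi are indexed by nat n >= 0; the value phi(-1) = 0 of the
   paper is never needed since k ranges over 0 <= k <= (n-1)/2. *)

Definition fbase (q n : nat) : nat :=
  match n with
  | 0 | 1 => 0
  | 2 => 1
  | 3 => q ^ 2 + 1
  | _ => q ^ 4 + 2 * q ^ 2 + q + 1
  end.

Definition u (phi : nat -> nat) (n q k : nat) : nat :=
  q ^ (2 * k + 2) * phi (n - k - 1) + phi k
  + (\sum_(0 <= i < k.+1) q ^ i) * (\sum_(k <= j < n - 1) q ^ j).

Definition min_upto (g : nat -> nat) (m : nat) : nat :=
  foldr (fun k acc => minn (g k) acc) (g 0) (iota 1 m).

Fixpoint fopt_aux (fuel q n : nat) : nat :=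
  match fuel with
  | 0 => 0
  | fuel'.+1 =>
      if n <= 4 then fbase q n
      else min_upto (fun k => u (fopt_aux fuel' q) n q k) ((n - 1) %/ 2)
  end.

(* f^opt(n, q); fuel n.+1 suffices since recursive calls are on smaller n. *)
Definition fopt (q n : nat) : nat := fopt_aux n.+1 q n.

Definition kstar (n : nat) : nat := n - 2 ^ trunc_log 2 n.

Definition prime_power (q : nat) : Prop :=
  exists p e, prime p /\ 0 < e /\ q = p ^ e.

(* Put x = 1/q and normalized q n F = x^(2n+2) (q^n + q (q-1)^2 F).  Summing the
   geometric series in u turns the normalized cost of splitting k + m + 1 at k into
     split_cost k m = e m + x^(2m+2) (e k - 1) + (1 - x) x^(k+2m+3),
   where e n is the normalized f^opt(n); e decreases from e 0 = x^2.
   For 2P <= n < 4P with P a power of 2, k*(n) splits n as (n - 2P, 2P - 1).  By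
   induction, any other split (k, m) with k <= m has P <= m, and m is itself optimally
   split as (m - P, P - 1) or (m - 2P, 2P - 1).  Unfolding e m this way exhibits a
   term (1 - x) x^a of the cost of (k, m) whose exponent a is smaller than those of
   the at most three terms by which the cost of k*(n) can exceed it; for x <= 1/4 it
   dominates them, so q0 = 4 works for every N. *)

From mathcomp Require Import all_boot all_order all_algebra zify ring lra.
Import Order.TTheory GRing.Theory Num.Theory.

Set Implicit Arguments.
Unset Strict Implicit.
Unset Printing Implicit Defensive.

Lemma eq_min_upto (g g' : nat -> nat) m :
  (forall k, k <= m -> g k = g' k) -> min_upto g m = min_upto g' m.
Proof.
move=> eq_g; rewrite /min_upto eq_g //.
have : all (fun k => g k == g' k) (iota 1 m).
  by apply/allP => k; rewrite mem_iota => /andP[_ ?]; rewrite eq_g //; lia.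
by elim: (iota 1 m) => //= i s IH /andP[/eqP-> /IH->].
Qed.

Lemma min_upto_le (g : nat -> nat) m k : k <= m -> min_upto g m <= g k.
Proof.
move=> le_km; rewrite /min_upto.
have : k \in 0 :: iota 1 m by rewrite -[0 :: _]/(iota 0 m.+1) mem_iota.
elim: (iota 1 m) => [|i s IH]; first by rewrite inE => /eqP->.
rewrite /= geq_min !inE => /or3P[k0 | /eqP-> | ks].
- by rewrite IH ?inE ?k0 ?orbT.
- by rewrite leqnn.
- by rewrite IH ?inE ?ks ?orbT.
Qed.

Lemma leq_min_upto (g : nat -> nat) m c :
  (forall k, k <= m -> c <= g k) -> c <= min_upto g m.
Proof.
move=> le_cg; rewrite /min_upto.
have : all (fun k => c <= g k) (iota 1 m).
  by apply/allP => k; rewrite mem_iota => /andP[_ ?]; apply: le_cg; lia.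
elim: (iota 1 m) => [_|i s IH /andP[le_ci /IH le_cs]] /=; first exact: le_cg.
by rewrite leq_min le_ci.
Qed.

Lemma fopt_aux_fuel q f1 f2 n :
  n < f1 -> n < f2 -> fopt_aux f1 q n = fopt_aux f2 q n.
Proof.
elim: f1 f2 n => [|f1 IH] [|f2] n //= lt1 lt2; case: ifP => // /negbT n_gt4.
by apply: eq_min_upto => k le_k; rewrite /u (IH f2 (n - k - 1)) ?(IH f2 k) //; lia.
Qed.

Lemma foptE q n : fopt q n =
  if n <= 4 then fbase q n else min_upto (fun k => u (fopt q) n q k) ((n - 1) %/ 2).
Proof.
rewrite {1}/fopt /=; case: ifP => // /negbT n_gt4; apply: eq_min_upto => k le_k.
by rewrite /u /fopt (@fopt_aux_fuel q n (n - k - 1).+1)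
  ?(@fopt_aux_fuel q n k.+1) //; lia.
Qed.

Lemma fopt_small q n : n <= 4 -> fopt q n = fbase q n.
Proof. by rewrite foptE => ->. Qed.

Lemma fopt_le_u q n k :
  0 < q -> 0 < n -> k <= (n - 1) %/ 2 -> fopt q n <= u (fopt q) n q k.
Proof.
move=> q_gt0; rewrite foptE; case: ifP => [le_n4 | _ _]; last exact: min_upto_le.
case: n le_n4 => [|[|[|[|[|]]]]] // _ _; case: k => [|[|]] // _;
  rewrite /u /index_iota /= !big_cons !big_nil !fopt_small //= !expnS !expn0; nia.
Qed.

Lemma fopt_kstar_small q n :
  2 <= n <= 4 -> n != 3 -> fopt q n = u (fopt q) n q (kstar n).
Proof.
case: n => [|[|[|[|[|]]]]] // _ _;
  rewrite /kstar /u /index_iota /= !big_cons !big_nil !fopt_small //= !expnS !expn0; nia.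
Qed.

Lemma kstar_block a n : 2 ^ a <= n < 2 ^ a.+1 -> kstar n = n - 2 ^ a.
Proof. by move=> n_block; rewrite /kstar (trunc_log_eq _ n_block). Qed.

Lemma kstar_le_half n : 0 < n -> kstar n <= (n - 1) %/ 2.
Proof.
move=> n_gt0; have [lo hi] := andP (trunc_log_bounds (isT : 1 < 2) n_gt0).
rewrite /kstar; rewrite expnS in hi; lia.
Qed.

Local Open Scope ring_scope.

Section SplitCost.

Variables (R : realFieldType) (x : R) (e : nat -> R).

Definition split_cost (k m : nat) : R :=
  e m + x ^+ (2 * m + 2) * (e k - 1) + (1 - x) * x ^+ (k + 2 * m + 3).

Hypothesis x_ge0 : 0 <= x.
Hypothesis x_le1 : x <= 1.
Hypothesis e_ge0 : forall n, 0 <= e n.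
Hypothesis e0 : e 0 = x ^+ 2.
Hypothesis e_le_split_cost : forall k m, (k <= m)%N -> e (k + m + 1) <= split_cost k m.

Lemma e_antitone i j : (i <= j)%N -> e j <= e i.
Proof.
have e_succ n : e n.+1 <= e n.
  have := @e_le_split_cost 0 n (leq0n n).
  rewrite add0n addn1 /split_cost e0 add0n.
  have -> : x ^+ (2 * n + 3) = x * x ^+ (2 * n + 2) by rewrite -exprS -addnS.
  have : 0 <= x ^+ (2 * n + 2) * (1 - x) by rewrite mulr_ge0 ?exprn_ge0 ?subr_ge0.
  rewrite expr2; lra.
move=> /subnK <-; elim: (j - i)%N => // d IH.
by rewrite addSn; apply: le_trans (e_succ _) IH.
Qed.

Lemma e_le1 n : e n <= 1.
Proof. by rewrite (le_trans (e_antitone (leq0n n))) // e0 exprn_ile1. Qed.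

Lemma onem_expr_ge0 a : 0 <= (1 - x) * x ^+ a.
Proof. by rewrite mulr_ge0 ?subr_ge0 ?exprn_ge0. Qed.

Lemma onem_expr_le a : (1 - x) * x ^+ a <= x ^+ a.
Proof. by rewrite ler_piMl ?exprn_ge0 // lerBlDr lerDl. Qed.

Lemma expr_e_ge0 a n : 0 <= x ^+ a * e n.
Proof. by rewrite mulr_ge0 ?exprn_ge0. Qed.

Section SmallRatio.

Hypothesis x_le_quarter : x <= 4^-1.

Lemma expr_le_quarter a b : (a < b)%N -> x ^+ b <= x ^+ a / 4.
Proof.
move=> lt_ab; apply: le_trans (ler_wiXn2l x_ge0 x_le1 lt_ab) _.
by rewrite exprSr ler_wpM2l ?exprn_ge0.
Qed.

Lemma onem_expr_ge a : x ^+ a * 3 / 4 <= (1 - x) * x ^+ a.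
Proof.
have : 0 <= x ^+ a * (4^-1 - x) by rewrite mulr_ge0 ?exprn_ge0 ?subr_ge0.
lra.
Qed.

Lemma split_cost_move_left j p s k m :
  (j < s)%N -> m = (j + p + 1)%N -> e m = split_cost j p ->
  split_cost s p <= split_cost k m.
Proof.
move=> lt_js -> em; rewrite /split_cost em /split_cost.
(* Every other power of x below has exponent > j + 2p + 3, so x^(j+2p+3) dominates. *)
have : 0 <= x ^+ (2 * p + 2) * (e j - e s).
  by rewrite mulr_ge0 ?exprn_ge0 // subr_ge0 e_antitone // ltnW.
have : x ^+ (2 * (j + p + 1) + 2) <= x ^+ (j + 2 * p + 3) / 4.
  by apply: expr_le_quarter; lia.
have : x ^+ (s + 2 * p + 3) <= x ^+ (j + 2 * p + 3) / 4.
  by apply: expr_le_quarter; lia.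
have := expr_e_ge0 (2 * (j + p + 1) + 2) k.
have := onem_expr_ge0 (k + 2 * (j + p + 1) + 3).
have := onem_expr_le (s + 2 * p + 3).
have := onem_expr_ge (j + 2 * p + 3); have := exprn_ge0 (j + 2 * p + 3) x_ge0.
lra.
Qed.

Lemma split_cost_move_right j p s k m r :
  (j < p)%N -> m = (j + p + 1)%N -> r = (p + p + 1)%N -> e m = split_cost j p ->
  split_cost s r <= split_cost k m.
Proof.
move=> lt_jp -> -> em; rewrite /split_cost em.
have := @e_le_split_cost p p (leqnn p); rewrite /split_cost.
have : 0 <= x ^+ (2 * p + 2) * (e j - e p).
  by rewrite mulr_ge0 ?exprn_ge0 // subr_ge0 e_antitone // ltnW.
have : 0 <= x ^+ (2 * (p + p + 1) + 2) * (1 - e s).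
  by rewrite mulr_ge0 ?exprn_ge0 ?subr_ge0 ?e_le1.
have : x ^+ (2 * (j + p + 1) + 2) <= x ^+ (j + 2 * p + 3) / 4.
  by apply: expr_le_quarter; lia.
have : x ^+ (p + 2 * p + 3) <= x ^+ (j + 2 * p + 3) / 4.
  by apply: expr_le_quarter; lia.
have : x ^+ (s + 2 * (p + p + 1) + 3) <= x ^+ (j + 2 * p + 3) / 4.
  by apply: expr_le_quarter; lia.
have := expr_e_ge0 (2 * (j + p + 1) + 2) k.
have := onem_expr_ge0 (k + 2 * (j + p + 1) + 3).
have := onem_expr_le (p + 2 * p + 3).
have := onem_expr_le (s + 2 * (p + p + 1) + 3).
have := onem_expr_ge (j + 2 * p + 3); have := exprn_ge0 (j + 2 * p + 3) x_ge0.
lra.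
Qed.

(* k*(3) is not an optimal split of 3, but the induction never needs to re-split 3. *)
Lemma split_cost_kstar_le n k :
  (5 <= n)%N ->
  (forall m, (2 <= m < n)%N -> m != 3 ->
     e m = split_cost (kstar m) (m - kstar m - 1)) ->
  (k <= (n - 1) %/ 2)%N ->
  split_cost (kstar n) (n - kstar n - 1) <= split_cost k (n - k - 1).
Proof.
move=> n_ge5 e_exact le_k.
have [b b_gt0 n_block] : exists2 b, (0 < b)%N & (2 ^ b.+1 <= n < 2 ^ b.+2)%N.
  have n_gt0 : (0 < n)%N by apply: leq_trans n_ge5.
  have [lo hi] := andP (trunc_log_bounds (isT : (1 < 2)%N) n_gt0).
  have t_ge2 : (2 <= trunc_log 2 n)%N.
    by apply: trunc_log_max => //; exact: leq_trans _ n_ge5.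
  by case: (trunc_log 2 n) t_ge2 lo hi => [|[|a]] // _ lo hi; exists a.+1; rewrite ?lo.
have e_block a m : (2 ^ a <= m < 2 ^ a.+1)%N -> (2 <= m < n)%N -> m != 3 ->
    e m = split_cost (m - 2 ^ a) (2 ^ a - 1).
  move=> m_block m_range m_ne3; rewrite e_exact // (kstar_block m_block).
  by congr split_cost; lia.
have P_cases : (2 ^ b == 2)%N || (4 <= 2 ^ b)%N.
  by case: b b_gt0 {n_block} => [|[|b]] // _; rewrite !expnS; have := expn_gt0 2 b; lia.
rewrite (kstar_block n_block); have := e_block b.+1; have := e_block b.
rewrite !expnS in n_block *.
move: (2 ^ b)%N P_cases n_block => P P_cases n_block e_lo e_hi.
rewrite (_ : n - (n - 2 * P) - 1 = 2 * P - 1)%N; last by lia.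
move def_m : (n - k - 1)%N => m.
case: (ltngtP m (2 * P - 1)) => [lt_m | gt_m | eq_m].
- apply: (@split_cost_move_right (m - P) (P - 1)); try lia.
  by apply: e_lo; lia.
- apply: (@split_cost_move_left (m - 2 * P) (2 * P - 1)); try lia.
  by apply: e_hi; lia.
- by rewrite eq_m (_ : k = n - 2 * P)%N //; lia.
Qed.

End SmallRatio.
End SplitCost.

Lemma natr_geom_sum (R : numFieldType) q a b : (1 < q)%N -> (a <= b)%N ->
  (\sum_(a <= i < b) q ^ i)%:R = q%:R ^+ a * (q%:R ^+ (b - a) - 1) / (q%:R - 1) :> R.
Proof.
move=> q_gt1 /subnKC <-; rewrite addKn; move: (b - a)%N => {}b.
have Q1_neq0 : q%:R - 1 != 0 :> R by rewrite subr_eq0 pnatr_eq1 neq_ltn q_gt1 orbT.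
rewrite -{1}[a]add0n big_addn addKn big_mkord natr_sum subrX1.
rewrite [(_ - 1) * _]mulrC mulrA mulfK // mulr_sumr.
by apply: eq_bigr => i _; rewrite natrX exprD mulrC.
Qed.

Definition normalized (q n F : nat) : rat :=
  q%:R^-1 ^+ (2 * n + 2) * (q ^ n + q * (q - 1) ^ 2 * F)%:R.

Lemma ler_normalized q n F G :
  (1 < q)%N -> (normalized q n F <= normalized q n G) = (F <= G)%N.
Proof.
move=> q_gt1; have q_gt0 := ltnW q_gt1.
rewrite /normalized ler_pM2l ?exprn_gt0 ?invr_gt0 ?ltr0n // ler_nat leq_add2l.
by rewrite leq_pmul2l // muln_gt0 q_gt0 expn_gt0 subn_gt0 q_gt1.
Qed.

Lemma normalized_u phi q n k : (1 < q)%N -> (k < n)%N ->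
  normalized q n (u phi n q k)
  = split_cost q%:R^-1 (fun j => normalized q j (phi j)) k (n - k - 1).
Proof.
move=> q_gt1 lt_kn; move def_m : (n - k - 1)%N => m.
have def_n : n = (k + m + 1)%N by lia.
rewrite /normalized /split_cost /u def_m (_ : n - 1 = k + m)%N; last by lia.
rewrite def_n !(natrD, natrM, natrX) natrB 1?ltnW //.
rewrite !natr_geom_sum ?leq_addr // addKn subn0 expr0 mul1r.
rewrite !exprVn !mul2n -!addnn !exprD (exprS _ k) expr1.
have Q_neq0 : q%:R != 0 :> rat by rewrite pnatr_eq0 -lt0n ltnW.
have Q1_neq0 : q%:R - 1 != 0 :> rat by rewrite subr_eq0 pnatr_eq1 neq_ltn q_gt1 orbT.
have := expf_neq0 k Q_neq0; have := expf_neq0 m Q_neq0.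
(* field cannot handle powers with variable exponents. *)
move: (q%:R ^+ k : rat) (q%:R ^+ m : rat) => A B B_neq0 A_neq0.
by field; rewrite Q_neq0 A_neq0 B_neq0 Q1_neq0.
Qed.

Lemma normalized_fopt0 q : normalized q 0 (fopt q 0) = q%:R^-1 ^+ 2.
Proof. by rewrite /normalized fopt_small //= !muln0 addn0 expn0 mulr1. Qed.

Lemma normalized_fopt_le q k m : (1 < q)%N -> (k <= m)%N ->
  normalized q (k + m + 1) (fopt q (k + m + 1))
  <= split_cost q%:R^-1 (fun j => normalized q j (fopt q j)) k m.
Proof.
move=> q_gt1 le_km; have lt_k : (k < k + m + 1)%N by lia.
have := normalized_u (fopt q) q_gt1 lt_k.
rewrite (_ : k + m + 1 - k - 1 = m)%N; last by lia.
by move=> <-; rewrite ler_normalized // fopt_le_u //; lia.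
Qed.

Lemma fopt_kstar q n : (4 <= q)%N -> (5 <= n)%N -> fopt q n = u (fopt q) n q (kstar n).
Proof.
move=> q_ge4; elim/ltn_ind: n => n IH n_ge5.
have q_gt1 : (1 < q)%N by lia.
have x_le_quarter : q%:R^-1 <= 4^-1 :> rat.
  by rewrite lef_pV2 ?posrE ?ltr0n ?(ler_nat _ 4) //; lia.
have x_ge0 : 0 <= q%:R^-1 :> rat by rewrite invr_ge0.
have e_ge0 j : 0 <= normalized q j (fopt q j) by rewrite mulr_ge0 ?exprn_ge0.
have e_exact m : (2 <= m < n)%N -> m != 3 ->
    normalized q m (fopt q m)
    = split_cost q%:R^-1 (fun j => normalized q j (fopt q j))
                 (kstar m) (m - kstar m - 1).
  move=> m_range m_ne3; have lt_km : (kstar m < m)%N by move: (@kstar_le_half m); lia.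
  rewrite -normalized_u //.
  case: (leqP 5 m) => [m_ge5 | m_lt5]; first by rewrite IH //; lia.
  by rewrite fopt_kstar_small //; lia.
have le_kstar : (kstar n <= (n - 1) %/ 2)%N by apply: kstar_le_half; lia.
rewrite foptE ifN; last by lia.
apply/eqP; rewrite eqn_leq min_upto_le //=.
apply: leq_min_upto => k le_k.
rewrite -(ler_normalized n _ _ q_gt1) !normalized_u //; try lia.
apply: split_cost_kstar_le => //; first by lra.
- exact: normalized_fopt0.
- by move=> k' m; apply: normalized_fopt_le.
Qed.

Local Close Scope ring_scope.

Theorem proposition3p38 :
  forall N : nat, 5 <= N ->
  exists q0 : nat, forall q : nat, prime_power q -> q0 <= q ->
    fopt q N = u (fopt q) N q (kstar N).
Proof. by move=> N N_ge5; exists 4 => q _ q_ge4; apply: fopt_kstar. Qed.
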